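(* Let $\Sigma$ be a finite alphabet and let $C \subseteq \Sigma^n$ be a code with $|C|\ge 2$ and minimum Levenshtein distance $d$. Let $t<n$ be a non-negative integer, let $N$ be an integer with $n-t\le N\le n+t$, let $v\in\Sigma^N$, and let $\ell = |B_\mathsf{L}(v,t,t)\cap C|$. If $$t < n - \sqrt{n(n-d/2)},$$ then $$\ell \leq \frac{(d/2)(n+t)}{(d/2-2t)n+t^2} \leq nd.$$
   Context: For words $x,y$ over $\Sigma$ (possibly of different lengths), the Levenshtein distance $d_\mathsf{L}(x,y)$ is the minimum number of single-symbol insertions and deletions needed to transform $x$ into $y$. The minimum Levenshtein distance of a code $C$ is $\min\{d_\mathsf{L}(c_1,c_2): c_1\neq c_2 \in C\}$. For a word $v$ and non-negative integers $a,b$, $B_\mathsf{L}(v,a,b)$ denotes the set of all words obtainable from $v$ by at most $a$ insertions and at most $b$ deletions. *)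

From HB Require Import structures.
From mathcomp Require Import all_boot all_order all_algebra.
Set Implicit Arguments. Unset Strict Implicit. Unset Printing Implicit Defensive.

Section Lev.
Variable T : finType.

Definition del1 (x : seq T) : seq (seq T) :=
  [seq take i x ++ drop i.+1 x | i <- iota 0 (size x)].

Definition ins1 (x : seq T) : seq (seq T) :=
  [seq take i x ++ a :: drop i x | i <- iota 0 (size x).+1, a <- enum T].

(* reachk k a b x y : y is obtained from x by a sequence of exactly a
   single-symbol insertions and b single-symbol deletions (in any order);
   k is fuel, equal to a + b. *)
Fixpoint reachk (k a b : nat) (x y : seq T) : bool :=
  if k is k'.+1 then
    ((0 < a) && has (fun z => reachk k' a.-1 b z y) (ins1 x))
    || ((0 < b) && has (fun z => reachk k' a b.-1 z y) (del1 x))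
  else [&& a == 0, b == 0 & x == y].

Definition reach (a b : nat) (x y : seq T) : bool := reachk (a + b) a b x y.

Definition inBL (v : seq T) (a b : nat) (w : seq T) : bool :=
  [exists a' : 'I_a.+1, exists b' : 'I_b.+1, reach a' b' v w].

(* The search range is bounded by
   size x + size y, which always suffices (delete all, insert all). *)
Definition dL (x y : seq T) : nat :=
  find (fun k => [exists a : 'I_k.+1, reach a (k - a) x y])
       (iota 0 (size x + size y).+1).

Definition min_lev_dist (n : nat) (C : {set n.-tuple T}) (d : nat) : Prop :=
  (exists c1, exists c2, [/\ c1 \in C, c2 \in C, c1 != c2 & dL c1 c2 = d])
  /\ (forall c1 c2, c1 \in C -> c2 \in C -> c1 != c2 -> d <= dL c1 c2).

End Lev.

From mathcomp Require Import all_boot all_order all_algebra.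
From mathcomp Require Import zify ring lra.
Import Order.TTheory GRing.Theory Num.Theory.

Set Implicit Arguments.
Unset Strict Implicit.
Unset Printing Implicit Defensive.

(* A word reachable from v by t insertions and t deletions shares with v a
   common subsequence of length W = max(N, n) - t, i.e. it contains v restricted
   to some W-subset of the N positions of v.  Two codewords sharing a common
   subsequence of length s are at distance at most 2(n - s), so distinct
   codewords in the ball give W-subsets of an N-set pairwise meeting in at most
   n - d/2 points.  The Johnson-type double counting bound
   l W^2 <= N (W + (l - 1)(n - d/2)) then gives the claim, the hypothesis on t
   being exactly n (n - d/2) < (n - t)^2. *)

Section SubsequenceDistance.
Variable T : finType.
Implicit Types x y z : seq T.

Lemma del1P x y :
  reflect (exists2 i, i < size x & y = take i x ++ drop i.+1 x) (y \in del1 x).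
Proof.
apply: (iffP mapP) => [[i] | [i lt_ix ->]].
  by rewrite mem_iota add0n => /andP[_ lt_ix] ->; exists i.
by exists i; rewrite // mem_iota.
Qed.

Lemma ins1P x y :
  reflect (exists i a, y = take i x ++ a :: drop i x) (y \in ins1 x).
Proof.
apply: (iffP allpairsP) => [[[i a]] [_ _ ->] | [i [a ->]]]; first by exists i, a.
have [le_ix | /ltnW le_xi] := leqP i (size x).
  by exists (i, a); split; rewrite ?mem_iota ?mem_enum.
exists (size x, a); split; rewrite ?mem_iota ?mem_enum //=.
by rewrite take_size drop_size take_oversize ?drop_oversize.
Qed.

Lemma size_del1 x y : y \in del1 x -> size y = (size x).-1.
Proof. by case/del1P=> i lt_ix ->; rewrite size_cat size_take size_drop lt_ix; lia. Qed.

Lemma size_ins1 x y : y \in ins1 x -> size y = (size x).+1.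
Proof. by case/ins1P=> i [a ->]; rewrite size_cat /= addnS -size_cat cat_take_drop. Qed.

Lemma subseq_cons_inv z a s :
  subseq z (a :: s) -> subseq z s \/ exists2 z', z = a :: z' & subseq z' s.
Proof.
case: z => [|b z] /=; first by left; apply: sub0seq.
by case: eqP => [-> | _]; [right; exists z | left].
Qed.

Lemma subseq_drop_letter z s1 a s2 : subseq z (s1 ++ a :: s2) ->
  exists z', [/\ subseq z' z, subseq z' (s1 ++ s2) & size z <= (size z').+1].
Proof.
elim: s1 z => [|b s1 IHs] z /=.
  case/subseq_cons_inv => [sub_z | [z' -> sub_z']]; first by exists z; rewrite subseq_refl.
  by exists z'; rewrite subseq_cons.
case/subseq_cons_inv => [/IHs[z' [sub_z'z sub_z' le_z]] | [z0 -> /IHs[z' [? ? ?]]]].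
  by exists z'; split=> //; apply: subseq_trans sub_z' (subseq_cons _ _).
by exists (b :: z'); rewrite /= eqxx.
Qed.

Lemma del1_subseq x y : y \in del1 x -> subseq y x.
Proof.
case/del1P=> i _ ->; rewrite -[X in subseq _ X](cat_take_drop i x).
by rewrite cat_subseq // -add1n -drop_drop drop_subseq.
Qed.

Lemma reachk_common_subseq k a b x y : reachk k a b x y ->
  exists z, [/\ subseq z x, subseq z y, size x <= size z + b & size y + b = size x + a].
Proof.
elim: k a b x y => [|k IHk] a b x y /=.
  by case/and3P=> /eqP-> /eqP-> /eqP->; exists y; rewrite subseq_refl addn0.
case/orP=> /andP[pos /hasP[x' x'x /IHk[z [zx' zy le_x' eq_y]]]].
  case/ins1P: (x'x) zx' => i [c ->] /subseq_drop_letter[z' [z'z]].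
  rewrite cat_take_drop => z'x le_z; have := size_ins1 x'x.
  by exists z'; split=> //; [exact: subseq_trans z'z zy | lia | lia].
have /del1P[i lt_ix _] := x'x; have := size_del1 x'x.
by exists z; split=> //; [exact: subseq_trans zx' (del1_subseq x'x) | lia | lia].
Qed.

Lemma exists_del1_subseq x z : subseq z x -> size z < size x ->
  exists2 x', x' \in del1 x & subseq z x'.
Proof.
elim: x z => [|c x IHx] z //= sub_z lt_z.
case/subseq_cons_inv: sub_z lt_z => [sub_z _ | [z' -> sub_z' lt_z]].
  by exists x => //; apply/del1P; exists 0; rewrite /= ?drop0.
have [x' /del1P[i lt_ix ->] sub_x'] := IHx z' sub_z' lt_z.
by exists (c :: (take i x ++ drop i.+1 x)); [apply/del1P; exists i.+1 | rewrite /= eqxx].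
Qed.

Lemma exists_ins1_subseq y z : subseq z y -> size z < size y ->
  exists2 z', z' \in ins1 z & subseq z' y.
Proof.
elim: y z => [|c y IHy] z //= sub_z lt_z.
case/subseq_cons_inv: sub_z lt_z => [sub_z _ | [z' -> sub_z' lt_z]].
  by exists (c :: z); [apply/ins1P; exists 0, c; rewrite take0 drop0 | rewrite /= eqxx].
have [w /ins1P[i [a ->]] sub_w] := IHy z' sub_z' lt_z.
exists (c :: (take i z' ++ a :: drop i z')); last by rewrite /= eqxx.
by apply/ins1P; exists i.+1, a.
Qed.

Lemma reachk_ins_subseq k z y : subseq z y -> size y = size z + k -> reachk k k 0 z y.
Proof.
elim: k z => [|k IHk] z sub_z size_y /=.
  by rewrite -(size_subseq_leqif sub_z) size_y addn0.
have [|z' z'z sub_z'] := exists_ins1_subseq sub_z; first by rewrite size_y; lia.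
apply/orP; left; apply/hasP; exists z' => //; apply: IHk => //.
by rewrite (size_ins1 z'z) size_y addSnnS.
Qed.

Lemma reachk_del_ins_subseq j z x y : subseq z x -> subseq z y ->
  size x = size z + j -> reachk (j + (size y - size z)) (size y - size z) j x y.
Proof.
elim: j x => [|j IHj] x sub_zx sub_zy size_x.
  have/eqP <- : z == x by rewrite -(size_subseq_leqif sub_zx) size_x addn0.
  by apply: reachk_ins_subseq; rewrite // subnKC // size_subseq.
have [|x' x'x sub_zx'] := exists_del1_subseq sub_zx; first by rewrite size_x; lia.
rewrite addSn /=; apply/orP; right; apply/hasP; exists x' => //.
by apply: IHj; rewrite // (size_del1 x'x) size_x addnS.
Qed.

Lemma dL_le_reach x y k a : a <= k <= size x + size y -> reach a (k - a) x y ->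
  dL x y <= k.
Proof.
case/andP=> le_ak le_k reach_xy; rewrite leqNgt; apply/negP=> /(before_find 0).
rewrite nth_iota ?ltnS // add0n => /negbT/negP; apply; apply/existsP.
have lt_ak : a < k.+1 by [].
by exists (Ordinal lt_ak).
Qed.

Lemma dL_le_common_subseq n x y z : subseq z x -> subseq z y ->
  size x = n -> size y = n -> dL x y <= (n - size z).*2.
Proof.
move=> sub_zx sub_zy size_x size_y; have le_zn : size z <= n by rewrite -size_x size_subseq.
apply: (@dL_le_reach _ _ _ (n - size z)); first by rewrite size_x size_y; lia.
have -> : (n - size z).*2 - (n - size z) = n - size z by lia.
have size_xz : size x = size z + (n - size z) by rewrite size_x subnKC.
by have := reachk_del_ins_subseq sub_zx sub_zy size_xz; rewrite size_y.
Qed.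

Lemma reach_dL x y : size x = size y ->
  exists2 a, a <= dL x y & reach a (dL x y - a) x y.
Proof.
move=> size_xy; set p := fun k => [exists a : 'I_k.+1, reach a (k - a) x y].
have le_dL : dL x y <= size x + size y.
  apply: leq_trans (dL_le_common_subseq (sub0seq x) (sub0seq y) erefl (esym size_xy)) _.
  by rewrite subn0 -addnn -size_xy.
have: p (nth 0 (iota 0 (size x + size y).+1) (dL x y)).
  by apply: nth_find; rewrite has_find size_iota ltnS.
rewrite nth_iota ?ltnS //.
by case/existsP=> a reach_a; exists a; rewrite // -ltnS.
Qed.

Lemma dL_even x y : size x = size y -> ~~ odd (dL x y).
Proof.
move=> size_xy; have [a le_a /reachk_common_subseq[z [_ _ _]]] := reach_dL size_xy.
rewrite size_xy => size_eq; have -> : dL x y = a.*2 by lia.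
by rewrite odd_double.
Qed.

Lemma inBL_common_subseq v a b w : inBL v a b w ->
  exists z, [/\ subseq z v, subseq z w & maxn (size v - b) (size w - a) <= size z].
Proof.
case/existsP=> a' /existsP[b' /reachk_common_subseq[z [zv zw le_v eq_w]]].
by exists z; split=> //; have := ltn_ord a'; have := ltn_ord b'; lia.
Qed.

Section Codes.
Variables (n d : nat) (C : {set n.-tuple T}).
Hypothesis dC : min_lev_dist C d.

Lemma min_lev_dist_even : ~~ odd d.
Proof. by case: dC => [[c [c' [_ _ _ <-]]] _]; apply: dL_even; rewrite !size_tuple. Qed.

Lemma min_lev_dist_half_le : d./2 <= n.
Proof.
case: dC => [[c [c' [_ _ _ <-]]] _].
have := dL_le_common_subseq (sub0seq c) (sub0seq c') (size_tuple c) (size_tuple c').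
by rewrite subn0 => /half_leq; rewrite doubleK.
Qed.

Lemma min_lev_dist_common_subseq c c' z : c \in C -> c' \in C -> c != c' ->
  subseq z c -> subseq z c' -> size z <= n - d./2.
Proof.
move=> cC c'C neq_cc' zc zc'; have := size_subseq zc; rewrite size_tuple.
have := dL_le_common_subseq zc zc' (size_tuple c) (size_tuple c').
move=> /(leq_trans (dC.2 _ _ cC c'C neq_cc'))/half_leq; rewrite doubleK.
by move: d./2 (size z) => h s; lia.
Qed.

End Codes.

End SubsequenceDistance.

Lemma subseq_enum_subset (I : finType) (A B : {set I}) :
  A \subset B -> subseq (enum A) (enum B).
Proof.
move=> /subsetP sAB; have -> : enum A = [seq x <- enum B | x \in A].
  rewrite /enum_mem -filter_predI; apply: eq_filter => x /=.
  by case: (boolP (x \in A)) => // /sAB ->.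
exact: filter_subseq.
Qed.

Section Restriction.
Variables (T : eqType) (N : nat) (v : N.-tuple T).

Definition restr (S : {set 'I_N}) : seq T := [seq tnth v i | i <- enum S].

Lemma size_restr (S : {set 'I_N}) : size (restr S) = #|S|.
Proof. by rewrite size_map cardE. Qed.

Lemma subseq_restr (S S' : {set 'I_N}) : S \subset S' -> subseq (restr S) (restr S').
Proof. by move=> sSS'; apply/map_subseq/subseq_enum_subset. Qed.

Lemma subseq_restrP z : subseq z v -> exists S, z = restr S.
Proof.
case/subseqP=> m size_m ->; exists [set i : 'I_N | nth false m i].
rewrite /restr /enum_mem filter_mask map_mask -enumT map_tnth_enum; congr mask.
rewrite -[in LHS](mkseq_nth false m) size_m size_tuple /mkseq -val_enum_ord -map_comp.
by apply: eq_map => i /=; rewrite inE.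
Qed.

End Restriction.

Lemma inBL_restr (T : finType) N (v : N.-tuple T) a b (w : seq T) : inBL v a b w ->
  exists S : {set 'I_N}, #|S| = maxn (N - b) (size w - a) /\ subseq (restr v S) w.
Proof.
case/inBL_common_subseq=> z [zv zw]; rewrite size_tuple => le_z.
set W := maxn _ _; have [S def_S] := subseq_restrP (subseq_trans (take_subseq z W) zv).
exists S; rewrite -(size_restr v) -def_S size_takel //; split=> //.
exact: subseq_trans (take_subseq z W) zw.
Qed.

Lemma cauchy_schwarz_sum (I : finType) (f : I -> nat) :
  (\sum_i f i) * (\sum_i f i) <= #|I| * \sum_i f i * f i.
Proof.
have amgm a b : 2 * (a * b) <= a * a + b * b.
  by have := (nat_AGM2 a b).1; rewrite sqrnD -!mulnn; lia.
have sum_const c : \sum_(i : I) c = #|I| * c by rewrite sum_nat_const.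
rewrite -leq_double big_distrlr /= -mul2n big_distrr /=.
apply: (@leq_trans (\sum_i \sum_j (f i * f i + f j * f j))).
  by apply: leq_sum => i _; rewrite big_distrr; apply: leq_sum => j _; apply: amgm.
under eq_bigr => i _ do rewrite big_split /= sum_const.
by rewrite big_split /= -big_distrr sum_const addnn.
Qed.

Lemma johnson_bound (I U : finType) (S : I -> {set U}) (L : {set I}) (W lam : nat) :
  {in L, forall c, #|S c| = W} ->
  {in L &, forall c c', c != c' -> #|S c :&: S c'| <= lam} ->
  #|L| * (W * W) <= #|U| * (W + (#|L| - 1) * lam).
Proof.
move=> card_S card_SI; have [-> // | L_gt0] := posnP #|L|.
have card_sum (A : {set U}) : #|A| = \sum_p (p \in A : nat).
  by rewrite -sum1_card big_mkcond; apply: eq_bigr => p _; case: (p \in A).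
pose m p := \sum_(c in L) (p \in S c : nat).
have sum_m : \sum_p m p = #|L| * W.
  rewrite exchange_big /= -sum_nat_const; apply: eq_bigr => c Lc.
  by rewrite -card_sum card_S.
have sum_m2 : \sum_p m p * m p = \sum_(c in L) \sum_(c' in L) #|S c :&: S c'|.
  under eq_bigr => p _ do rewrite big_distrlr /=.
  rewrite exchange_big; apply: eq_bigr => c _; rewrite exchange_big; apply: eq_bigr => c' _.
  by rewrite card_sum; apply: eq_bigr => p _; rewrite in_setI mulnb.
have row_bound c : c \in L -> \sum_(c' in L) #|S c :&: S c'| <= W + (#|L| - 1) * lam.
  move=> Lc; rewrite (bigD1 c) //= setIid card_S // leq_add2l.
  apply: (@leq_trans (\sum_(c' in L | c' != c) lam)).
    by apply: leq_sum => c' /andP[Lc' c'c]; apply: card_SI; rewrite // eq_sym.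
  have : \sum_(c' in L) lam = lam + \sum_(c' in L | c' != c) lam by rewrite (bigD1 c).
  rewrite sum_nat_const mulnBl mul1n; lia.
have le_sum : \sum_(c in L) \sum_(c' in L) #|S c :&: S c'| <= #|L| * (W + (#|L| - 1) * lam).
  by rewrite -sum_nat_const; apply: leq_sum.
have := cauchy_schwarz_sum m; rewrite sum_m sum_m2 => /leq_trans.
move/(_ _ (leq_mul (leqnn #|U|) le_sum)).
have -> : #|L| * W * (#|L| * W) = #|L| * (#|L| * (W * W)) by rewrite mulnACA -mulnA.
by rewrite [#|U| * _]mulnCA leq_pmul2l.
Qed.

Lemma johnson_arith (n N t e l : nat) :
  N <= n + t -> e <= n -> n * (n - e) < (n - t) * (n - t) ->
  l * (maxn (N - t) (n - t) * maxn (N - t) (n - t))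
    <= N * (maxn (N - t) (n - t) + (l - 1) * (n - e)) ->
  l * ((n - t) * (n - t) - n * (n - e)) <= e * (n + t).
Proof.
move=> le_N le_en disc; set W := maxn _ _; set lam := n - e.
have lt_te : t < e.
  by rewrite ltnNge; apply/negP => le_et; move: disc; rewrite ltnNge leq_mul //; lia.
have le_lamW : lam <= W by rewrite /W /lam; lia.
have le_D : (n - t) * (n - t) - n * lam <= W * W - N * lam.
  rewrite /W; case: (leqP (N - t) (n - t)) => [le_Nn | lt_nN].
    by rewrite leq_sub2l // leq_mul //; lia.
  have [k ->] : exists k, N = n + k by exists (N - n); lia.
  have -> : n + k - t = (n - t) + k by lia.
  have : k * lam <= k * (n - t) by rewrite leq_mul2l /lam; lia.
  by move: (n - t) => u; rewrite !mulnDl !mulnDr; lia.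
have le_NW : N * (W - lam) <= e * (n + t) by rewrite mulnC leq_mul // /W /lam; lia.
clearbody W lam; case: (posnP l) => [-> // | l_gt0] johnson.
have le_lW : l * (W * W - N * lam) <= N * (W - lam).
  have le_lN : N * lam <= l * (N * lam) by rewrite leq_pmull.
  have le_NlW : N * lam <= N * W by rewrite leq_mul2l le_lamW orbT.
  by move: johnson; rewrite !mulnBr mulnDr mulnCA mulnBl mul1n; lia.
exact: leq_trans (leq_mul (leqnn l) le_D) (leq_trans le_lW le_NW).
Qed.

Local Open Scope ring_scope.

Lemma sqrtr_lt_sqr (R : rcfType) (a b : R) : Num.sqrt a < b -> a < b ^+ 2.
Proof.
move=> lt_ab; have b_gt0 := le_lt_trans (sqrtr_ge0 a) lt_ab.
by rewrite -ltr_sqrt ?exprn_gt0 // sqrtr_sqr gtr0_norm.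
Qed.

Lemma lt_sub_sqrt_nat (R : rcfType) (n e t : nat) : (e <= n)%N -> (t <= n)%N ->
  t%:R < n%:R - Num.sqrt (n%:R * (n%:R - e%:R)) :> R ->
  (n * (n - e) < (n - t) * (n - t))%N.
Proof.
move=> le_en le_tn lt_t.
have /sqrtr_lt_sqr : Num.sqrt (n%:R * (n%:R - e%:R)) < (n - t)%:R :> R.
  by rewrite natrB //; lra.
by rewrite -natrB // -natrM -natrX ltr_nat mulnn.
Qed.

Lemma johnson_ratio_bounds (R : realFieldType) (n e t l : nat) :
  (t <= n)%N -> (e <= n)%N -> (n * (n - e) < (n - t) * (n - t))%N ->
  (l * ((n - t) * (n - t) - n * (n - e)) <= e * (n + t))%N ->
  let ratio : R := e%:R * (n + t)%:R / ((e%:R - 2 * t%:R) * n%:R + t%:R ^+ 2) in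
  l%:R <= ratio /\ ratio <= (n * e.*2)%:R.
Proof.
move=> le_tn le_en disc le_l ratio; set D := ((n - t) * (n - t) - n * (n - e))%N in le_l.
have D_gt0 : (0 < D)%N by rewrite subn_gt0.
have -> : ratio = (e * (n + t))%:R / D%:R.
  by rewrite /ratio /D natrM natrB ?(ltnW disc) // !natrM !natrB //; congr (_ / _); ring.
have D_pos : 0 < D%:R :> R by rewrite ltr0n.
rewrite ler_pdivlMr // ler_pdivrMr // -!natrM !ler_nat; split=> //.
apply: leq_trans (leq_pmulr _ D_gt0).
by rewrite -muln2 mulnCA leq_mul2l muln2 -addnn leq_add2l le_tn orbT.
Qed.

Theorem mainTheorem3 (R : rcfType) (T : finType) (n : nat)
    (C : {set n.-tuple T}) (d t N : nat) (v : N.-tuple T) :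
  (2 <= #|C|)%N ->
  min_lev_dist C d ->
  (t < n)%N ->
  (n - t <= N <= n + t)%N ->
  t%:R < n%:R - Num.sqrt (n%:R * (n%:R - d%:R / 2) : R) ->
  let l := #|[set c in C | inBL v t t c]| in
  (l%:R : R) <= (d%:R / 2 * (n + t)%:R) / ((d%:R / 2 - 2 * t%:R) * n%:R + t%:R ^+ 2)
  /\ ((d%:R : R) / 2 * (n + t)%:R) / ((d%:R / 2 - 2 * t%:R) * n%:R + t%:R ^+ 2)
     <= (n * d)%:R :> R.
Proof.
move=> _ dC lt_tn /andP[_ le_N] t_small l.
have le_en := min_lev_dist_half_le dC.
have de : d = (d./2).*2 by rewrite -[LHS]odd_double_half (negbTE (min_lev_dist_even dC)).
set e := d./2 in le_en de; have d2 : d%:R / 2 = e%:R :> R.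
  by rewrite de -muln2 natrM mulfK // pnatr_eq0.
rewrite d2 in t_small *; rewrite de.
have disc := lt_sub_sqrt_nat le_en (ltnW lt_tn) t_small.
pose L := [set c in C | inBL v t t c].
have /fin_all_exists2[S S_card S_sub] : forall c, exists2 S : {set 'I_N},
    c \in L -> #|S| = maxn (N - t) (n - t) & c \in L -> subseq (restr v S) c.
  move=> c; have [|Lc] := boolP (c \in L); last by exists set0 => Lc'; case/negP: Lc.
  rewrite inE => /andP[_ /inBL_restr[S [card_S sub_S]]].
  by exists S => _; rewrite // card_S size_tuple.
have S_cap : {in L &, forall c c', c != c' -> (#|S c :&: S c'| <= n - e)%N}.
  move=> c c' Lc Lc' neq_cc'; have := S_sub c Lc; have := S_sub c' Lc'.
  move: Lc Lc'; rewrite !inE -(size_restr v) => /andP[cC _] /andP[c'C _] sub_c' sub_c.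
  apply: (min_lev_dist_common_subseq dC cC c'C neq_cc').
    exact: subseq_trans (subseq_restr v (subsetIl _ _)) sub_c.
  exact: subseq_trans (subseq_restr v (subsetIr _ _)) sub_c'.
have := johnson_bound S_card S_cap; rewrite card_ord => /(johnson_arith le_N le_en disc).
exact: johnson_ratio_bounds (ltnW lt_tn) le_en disc.
Qed.
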